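(* Fix a monomial order on $S$. Let $J,E,E'$ be ideals of $S$ such that $(J,E)$ and $(J,E')$ are G-nice pairs. The following are equivalent: (a) $(J+E)\cap(J+E')=J+(E\cap E')$ and $(J,E\cap E')$ is a G-nice pair; (b) $\mathrm{in}((J+E)\cap(J+E'))=\mathrm{in}(J)+\mathrm{in}(E\cap E')$.
   Context: $K$ is a field and $S=K[x_1,\ldots,x_n]$ with a fixed monomial order. For $0\neq f\in S$, $\mathrm{in}(f)$ denotes its leading monomial; for an ideal $I$, $\mathrm{in}(I)$ is the ideal generated by the leading monomials of the nonzero elements of $I$. A pair $(J,E)$ of ideals of $S$ is called Gröbner nice (G-nice) if $\mathrm{in}(J+E)=\mathrm{in}(J)+\mathrm{in}(E)$ (equivalently, the union of a Gröbner basis of $J$ and a Gröbner basis of $E$ is a Gröbner basis of $J+E$; equivalently, $\mathrm{in}(J\cap E)=\mathrm{in}(J)\cap\mathrm{in}(E)$). *)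

From HB Require Import structures.
From mathcomp Require Import all_boot all_order all_algebra.
From mathcomp Require Import mpoly.
Set Implicit Arguments. Unset Strict Implicit. Unset Printing Implicit Defensive.
Import GRing.Theory.
Local Open Scope ring_scope.

Section Defs.
Variables (n : nat) (K : fieldType).
Local Notation S := {mpoly K[n]}.
Local Notation Mon := 'X_{1..n}.

(* A monomial order: a total order on monomials, compatible with
   multiplication of monomials (addition of exponent vectors), and with
   the constant monomial 1 as least element (equivalently, a well-order). *)
Definition monomial_order (le : rel Mon) : Prop :=
  [/\ reflexive le, antisymmetric le, transitive le, total le
    & (forall m1 m2 m : Mon, le m1 m2 -> le (mnm_add m1 m) (mnm_add m2 m))]
  /\ (forall m : Mon, le (@mnm0 n) m).

Definition is_lead_mon (le : rel Mon) (f : S) (m : Mon) : Prop :=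
  m \in msupp f /\ forall m' : Mon, m' \in msupp f -> le m' m.

Definition is_ideal (I : S -> Prop) : Prop :=
  [/\ I 0,
      (forall f g, I f -> I g -> I (f + g))
    & (forall r f, I f -> I (r * f))].

Definition ideal_gen (G : S -> Prop) : S -> Prop :=
  fun p => exists s : seq (S * S),
    (forall x, x \in s -> G x.2) /\ p = \sum_(x <- s) x.1 * x.2.

Definition ideal_sum (I J : S -> Prop) : S -> Prop :=
  fun p => exists f g, I f /\ J g /\ p = f + g.

Definition ideal_cap (I J : S -> Prop) : S -> Prop :=
  fun p => I p /\ J p.

Definition ideal_eq (I J : S -> Prop) : Prop := forall p, I p <-> J p.

Definition init_ideal (le : rel Mon) (I : S -> Prop) : S -> Prop :=
  ideal_gen (fun p => exists f m, I f /\ f != 0 /\ is_lead_mon le f m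
                                  /\ p = 'X_[m]).

Definition G_nice (le : rel Mon) (J E : S -> Prop) : Prop :=
  ideal_eq (init_ideal le (ideal_sum J E))
           (ideal_sum (init_ideal le J) (init_ideal le E)).

End Defs.

(* Let L := (J+E) ∩ (J+E') and I := J + (E ∩ E').  Always I ⊆ L, hence
   in(J) + in(E∩E') ⊆ in(I) ⊆ in(L).  The equivalence then rests on one
   classical fact about Gröbner degenerations:

     (Macaulay)  if I ⊆ L are ideals and in(L) ⊆ in(I), then L = I,

   proved by the usual reduction argument: a nonzero f ∈ L has its leading
   monomial m in in(I), so m is divisible by the leading monomial of some
   g ∈ I; cancelling the leading term of f by a monomial multiple of g
   gives an element of L whose leading monomial is strictly smaller, and we
   conclude by well-founded induction on monomials.  Well-foundedness of a
   monomial order is derived from Dickson's lemma, which we prove first.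

   With this, (a) ⇒ (b) is a rewriting of in(L) = in(I), and (b) ⇒ (a)
   follows from the chain in(L) ⊆ in(J) + in(E∩E') ⊆ in(I) and Macaulay. *)
From HB Require Import structures.
From mathcomp Require Import all_boot all_order all_algebra.
From mathcomp Require Import mpoly.
From Stdlib Require Import Classical ClassicalEpsilon.
Set Implicit Arguments. Unset Strict Implicit. Unset Printing Implicit Defensive.
Import GRing.Theory.

Lemma min_beyond (g : nat -> nat) (a : nat) :
  exists j, a < j /\ forall j', a < j' -> g j <= g j'.
Proof.
suff bounded v : (exists j, a < j /\ g j <= v) ->
    exists j, a < j /\ forall j', a < j' -> g j <= g j'.
  by apply: (bounded (g a.+1)); exists a.+1.
elim: v => [|v IHv] [j [aj gj]].
  by exists j; split=> // j' _; move: gj; rewrite leqn0 => /eqP ->.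
have [|below_v] := classic (exists j, a < j /\ g j <= v); first exact: IHv.
exists j; split=> // j' aj'; apply: (leq_trans gj).
by rewrite ltnNge; apply/negP=> gj'v; apply: below_v; exists j'.
Qed.

Lemma nondecreasing_subseq (g : nat -> nat) : exists phi : nat -> nat,
  (forall i, phi i < phi i.+1) /\ (forall i, g (phi i) <= g (phi i.+1)).
Proof.
have next a : {j | a < j /\ forall j', a < j' -> g j <= g j'}.
  exact/constructive_indefinite_description/min_beyond.
pose psi i := iter i (fun a => sval (next a)) 0.
have psiS i : psi i.+1 = sval (next (psi i)) by [].
have psi_incr i : psi i < psi i.+1 by rewrite psiS; case: (svalP (next (psi i))).
exists (fun i => psi i.+1); split=> i; first exact: psi_incr.
rewrite [psi i.+1]psiS; case: (svalP (next (psi i))) => _; apply.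
exact: ltn_trans (psi_incr i) (psi_incr i.+1).
Qed.

Lemma dickson_coords n (s : seq 'I_n) (f : nat -> 'X_{1..n}) :
  exists phi : nat -> nat, (forall i, phi i < phi i.+1) /\
    forall i c, c \in s -> f (phi i) c <= f (phi i.+1) c.
Proof.
elim: s => [|c s [phi [phi_incr phi_mono]]]; first by exists id.
have [psi [psi_incr psi_mono]] := nondecreasing_subseq (fun i => f (phi i) c).
have phi_homo : {homo phi : i j / i < j} by apply: homo_ltn => //; exact: ltn_trans.
exists (phi \o psi); split=> [i|i c']; first exact: phi_homo.
rewrite inE /= => /orP [/eqP -> //|c's].
apply: (homo_leq (f := fun k => f (phi k) c') (r := fun a b => a <= b)).
- exact: leqnn.
- move=> y x z; exact: leq_trans.
- by move=> k; exact: phi_mono.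
- exact: ltnW.
Qed.

Lemma dickson n (f : nat -> 'X_{1..n}) : exists i j, i < j /\ (f i <= f j)%MM.
Proof.
have [phi [phi_incr phi_mono]] := dickson_coords (enum 'I_n) f.
exists (phi 0), (phi 1); split=> //; apply/mnm_lepP=> c.
by apply: phi_mono; rewrite mem_enum.
Qed.

Section MonomialOrder.
Variables (n : nat) (le : rel 'X_{1..n}).
Hypothesis le_mo : monomial_order le.

(* A monomial order refines divisibility, since 1 is its least element. *)
Lemma le_of_divides (m m' : 'X_{1..n}) : (m <= m')%MM -> le m m'.
Proof.
case: le_mo => [[_ _ _ _ le_add] le0] mm'.
by have := le_add _ (m' - m)%MM m (le0 _); rewrite add0m submK.
Qed.

Lemma no_infinite_descent (f : nat -> 'X_{1..n}) :
  ~ (forall k, le (f k.+1) (f k) /\ f k.+1 != f k).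
Proof.
case: le_mo => [[le_refl le_anti le_trans _ _] _] desc.
have le_chain i j : i <= j -> le (f j) (f i).
  apply: (homo_leq (r := fun a b => le b a)) => [x|y x z yx zy|k].
  - exact: le_refl.
  - exact: le_trans zy yx.
  - by case: (desc k).
have [i [j [ij div_ij]]] := dickson f.
have fji : f j = f i by apply: le_anti; rewrite le_chain ?(ltnW ij) ?le_of_divides.
have [le_next ne_next] := desc i.
move/eqP: ne_next; apply; apply: le_anti; rewrite le_next /=.
by rewrite -fji le_chain.
Qed.

Lemma monomial_order_ind (P : 'X_{1..n} -> Prop) :
  (forall m, (forall m', le m' m -> m' != m -> P m') -> P m) -> forall m, P m.
Proof.
move=> IH m; apply: NNPP => notPm.
have smaller (x : {m | ~ P m}) :
    {y : {m | ~ P m} | le (sval y) (sval x) /\ sval y != sval x}.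
  apply: constructive_indefinite_description; apply: NNPP => none.
  apply: (svalP x); apply: IH => m' le_m' ne_m'; apply: NNPP => notPm'.
  by apply: none; exists (exist _ m' notPm').
apply: (@no_infinite_descent (fun k => sval (iter k (fun x => sval (smaller x))
                                                     (exist _ m notPm)))).
by move=> k; exact: (svalP (smaller _)).
Qed.

Lemma max_in_seq (s : seq 'X_{1..n}) : s != [::] ->
  exists x, x \in s /\ forall y, y \in s -> le y x.
Proof.
case: le_mo => [[le_refl _ le_trans le_total _] _].
elim: s => [//|x s IHs] _.
have [-> | /IHs [x' [x's max_x']]] := eqVneq s [::].
  by exists x; split; rewrite ?inE // => y; rewrite inE => /eqP ->.
have [xx'|x'x] := orP (le_total x x').
  by exists x'; split=> [|y]; rewrite inE ?x's ?orbT // => /orP [/eqP ->|/max_x'].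
exists x; split=> [|y]; rewrite inE ?eqxx // => /orP [/eqP -> //|/max_x' yx'].
exact: le_trans x'x.
Qed.

Variable K : fieldType.
Local Notation S := {mpoly K[n]}.
Local Open Scope ring_scope.

Lemma lead_mon_exists (f : S) : f != 0 -> exists m, is_lead_mon le f m.
Proof. by rewrite -msupp_eq0 => /max_in_seq [m lead_m]; exists m. Qed.

Lemma mon_in_init (I : S -> Prop) (m : 'X_{1..n}) : init_ideal le I 'X_[m] ->
  exists g u, [/\ I g, g != 0, is_lead_mon le g u & (u <= m)%MM].
Proof.
move=> [s [gen_s sum_s]].
have : m \in msupp (\sum_(x <- s) x.1 * x.2) by rewrite -sum_s msuppX inE.
elim: s gen_s {sum_s} => [|y s IHs] gen_ys; first by rewrite big_nil msupp0.
rewrite big_cons => /msuppD_le; rewrite mem_cat => /orP [m_y|]; last first.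
  by apply: IHs => x xs; apply: gen_ys; rewrite inE xs orbT.
have [g [u [Ig [g_nz [lead_g y2E]]]]] := gen_ys y (mem_head _ _).
exists g, u; split=> //; move: m_y; rewrite y2E (perm_mem (msuppMX _ _)).
by case/mapP=> m' _ ->; exact: lem_addr.
Qed.

Lemma reduction_step (f g : S) (m u : 'X_{1..n}) :
  is_lead_mon le f m -> is_lead_mon le g u -> (u <= m)%MM ->
  exists r : S, forall m', m' \in msupp (f - r * g) -> le m' m /\ m' != m.
Proof.
case: le_mo => [[_ _ _ _ le_add] _] [m_f lead_f] [u_g lead_g] um.
pose d := (m - u)%MM; have du : (d + u)%MM = m by rewrite submK.
pose c := f@_m / g@_u.
have rgE : c%:MP * 'X_[d] * g = c *: (g * 'X_[d]).
  by rewrite -mulrA mul_mpolyC mulrC.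
exists (c%:MP * 'X_[d]) => m'; rewrite rgE => m'_supp; split.
  move: m'_supp => /msuppB_le; rewrite mem_cat => /orP [/lead_f //|].
  move/msuppZ_le; rewrite (perm_mem (msuppMX _ _)) => /mapP [m'' /lead_g le_m'' ->].
  by have := le_add _ _ d le_m''; rewrite addmC [(u + d)%MM]addmC du.
apply: contraTneq m'_supp => ->; rewrite mcoeff_msupp mcoeffB mcoeffZ -{2}du.
by rewrite mcoeffMX divfK ?subrr ?eqxx // -mcoeff_msupp.
Qed.

Lemma incl_of_init_incl (I L : S -> Prop) : is_ideal I -> is_ideal L ->
  (forall p, I p -> L p) -> (forall p, init_ideal le L p -> init_ideal le I p) ->
  forall p, L p -> I p.
Proof.
move=> [I0 I_add I_mul] [_ L_add L_mul] IL init_LI.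
suff lead_ind m f : L f -> f != 0 -> is_lead_mon le f m -> I f.
  move=> p Lp; have [-> //|p_nz] := eqVneq p 0.
  by have [m lead_p] := lead_mon_exists p_nz; exact: lead_ind lead_p.
elim/monomial_order_ind: m f => m IH f Lf f_nz lead_f.
have init_m : init_ideal le L 'X_[m].
  exists [:: (1, 'X_[m])]; rewrite big_seq1 mul1r; split=> // x.
  by rewrite inE => /eqP -> /=; exists f, m.
have [g [u [Ig _ lead_g um]]] := mon_in_init (init_LI _ init_m).
have [r below_m] := reduction_step lead_f lead_g um.
have -> : f = (f - r * g) + r * g by rewrite subrK.
apply: I_add; last exact: I_mul.
have [-> //|h_nz] := eqVneq (f - r * g) 0.
have [m' lead_h] := lead_mon_exists h_nz.
have [le_m' ne_m'] := below_m _ (proj1 lead_h).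
apply: (IH m' le_m' ne_m') lead_h => //.
by apply: L_add => //; rewrite -mulN1r; apply: L_mul; apply: IL; apply: I_mul.
Qed.

End MonomialOrder.

Section IdealOperations.
Variables (n : nat) (K : fieldType).
Local Notation S := {mpoly K[n]}.
Local Open Scope ring_scope.

Lemma init_ideal_mono (le : rel 'X_{1..n}) (A B : S -> Prop) :
  (forall p, A p -> B p) -> forall p, init_ideal le A p -> init_ideal le B p.
Proof.
move=> AB p [s [gen_s ->]]; exists s; split=> // x xs.
by have [f [m [Af lead_f]]] := gen_s x xs; exists f, m; split; first exact: AB.
Qed.

Lemma init_ideal_add (le : rel 'X_{1..n}) (A : S -> Prop) (p q : S) :
  init_ideal le A p -> init_ideal le A q -> init_ideal le A (p + q).
Proof.
move=> [s [gen_s ->]] [t [gen_t ->]]; exists (s ++ t); rewrite big_cat.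
by split=> // x; rewrite mem_cat => /orP [/gen_s|/gen_t].
Qed.

Lemma init_sum_incl (le : rel 'X_{1..n}) (A B : S -> Prop) : A 0 -> B 0 ->
  forall p, ideal_sum (init_ideal le A) (init_ideal le B) p ->
            init_ideal le (ideal_sum A B) p.
Proof.
move=> A0 B0 _ [a [b [init_a [init_b ->]]]]; apply: init_ideal_add.
  by apply: (init_ideal_mono _ init_a) => f Af; exists f, 0; rewrite addr0.
by apply: (init_ideal_mono _ init_b) => g Bg; exists 0, g; rewrite add0r.
Qed.

Lemma ideal0 (A : S -> Prop) : is_ideal A -> A 0.
Proof. by case. Qed.

Lemma ideal_sum_is_ideal (A B : S -> Prop) :
  is_ideal A -> is_ideal B -> is_ideal (ideal_sum A B).
Proof.
move=> [A0 A_add A_mul] [B0 B_add B_mul]; split.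
- by exists 0, 0; rewrite addr0.
- move=> _ _ [f1 [g1 [Af1 [Bg1 ->]]]] [f2 [g2 [Af2 [Bg2 ->]]]].
  by exists (f1 + f2), (g1 + g2); rewrite addrACA; split; [exact: A_add|split=> //; exact: B_add].
- move=> r _ [f [g [Af [Bg ->]]]]; exists (r * f), (r * g); rewrite mulrDr.
  by split; [exact: A_mul|split=> //; exact: B_mul].
Qed.

Lemma ideal_cap_is_ideal (A B : S -> Prop) :
  is_ideal A -> is_ideal B -> is_ideal (ideal_cap A B).
Proof.
move=> [A0 A_add A_mul] [B0 B_add B_mul]; split=> //.
- by move=> f g [Af Bf] [Ag Bg]; split; [exact: A_add|exact: B_add].
- by move=> r f [Af Bf]; split; [exact: A_mul|exact: B_mul].
Qed.

End IdealOperations.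

Theorem mainTheorem4 (n : nat) (K : fieldType) (le : rel 'X_{1..n})
  (J E E' : {mpoly K[n]} -> Prop) :
  monomial_order le ->
  is_ideal J -> is_ideal E -> is_ideal E' ->
  G_nice le J E -> G_nice le J E' ->
  ((ideal_eq (ideal_cap (ideal_sum J E) (ideal_sum J E'))
             (ideal_sum J (ideal_cap E E'))
    /\ G_nice le J (ideal_cap E E'))
   <->
   ideal_eq (init_ideal le (ideal_cap (ideal_sum J E) (ideal_sum J E')))
            (ideal_sum (init_ideal le J) (init_ideal le (ideal_cap E E')))).
Proof.
move=> le_mo idJ idE idE' _ _.
set L := ideal_cap _ _; set I := ideal_sum J _.
have I_sub_L p : I p -> L p.
  by case=> [f [g [Jf [[Eg E'g] ->]]]]; split; exists f, g.
have idEE' : is_ideal (ideal_cap E E') by exact: ideal_cap_is_ideal.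
have idI : is_ideal I by exact: ideal_sum_is_ideal.
have idL : is_ideal L by apply: ideal_cap_is_ideal; exact: ideal_sum_is_ideal.
have sum_sub_init_I := init_sum_incl (le := le) (ideal0 idJ) (ideal0 idEE').
(* (a) => (b): in(L) = in(I) = in(J) + in(E∩E'). *)
split=> [[L_eq_I nice_I] p|init_L_eq].
  split=> [init_L|init_sum]; first by apply/nice_I; apply: init_ideal_mono init_L => q /L_eq_I.
  exact/(init_ideal_mono I_sub_L)/nice_I.
(* (b) => (a): in(L) ⊆ in(J) + in(E∩E') ⊆ in(I), so L = I by Macaulay. *)
have init_L_sub_I p : init_ideal le L p -> init_ideal le I p.
  by move=> /init_L_eq /sum_sub_init_I.
have L_sub_I := incl_of_init_incl le_mo idI idL I_sub_L init_L_sub_I.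
split=> p; split; [exact: L_sub_I|exact: I_sub_L| |exact: sum_sub_init_I].
by move=> /(init_ideal_mono I_sub_L) /init_L_eq.
Qed.
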